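(* Let $(H,\prec,\cdot,\succ,\Delta)$ be a connected $q$-tridendriform bialgebra and let $e_{tri}:H\to H$ be defined by $e_{tri}(x)=\sum_{n\ge1}(-1)^{n+1}\succ^n\circ\bar\Delta^n(x)$. Then for every $x\in H$, $e_{tri}(x)=x-\sum x_{(1)}\succ e_{tri}(x_{(2)})$ where $\bar\Delta(x)=\sum x_{(1)}\otimes x_{(2)}$; moreover $e_{tri}(x)=x$ for every primitive $x$, and $e_{tri}(y\succ z)=0$ for all $y,z\in H$.
   Context: $q$-tridendriform algebra: vector space $H$ with bilinear $\prec,\cdot,\succ$ satisfying (1) $(a\prec b)\prec c=a\prec(b\prec c+b\succ c+q\,b\cdot c)$; (2) $(a\succ b)\prec c=a\succ(b\prec c)$; (3) $(a\prec b+a\succ b+q\,a\cdot b)\succ c=a\succ(b\succ c)$; (4) $(a\cdot b)\cdot c=a\cdot(b\cdot c)$; (5) $(a\succ b)\cdot c=a\succ(b\cdot c)$; (6) $(a\prec b)\cdot c=a\cdot(b\succ c)$; (7) $(a\cdot b)\prec c=a\cdot(b\prec c)$; $*:=\prec+q\,\cdot+\succ$. Unit conventions: $H_+=H\oplus\mathbb{K}1$, $\epsilon$ the projection to $\mathbb{K}$; $x\succ1=x\cdot1=1\cdot x=1\prec x=0$, $1\succ x=x=x\prec1$, $1*x=x*1=x$, and $(x*y)\otimes(1\circ1):=(x\circ y)\otimes1$ for $\circ\in\{\succ,\cdot,\prec\}$. A $q$-tridendriform bialgebra is such $H$ with linear $\Delta:H_+\to H_+\otimes H_+$, $\Delta(1)=1\otimes1$,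 $(\epsilon\otimes\mathrm{Id})\Delta(x)=1\otimes x$, $(\mathrm{Id}\otimes\epsilon)\Delta(x)=x\otimes1$, and $\Delta(x\circ y)=\sum(x_{(1)}*y_{(1)})\otimes(x_{(2)}\circ y_{(2)})$ for $\circ\in\{\succ,\cdot,\prec\}$, $x,y\in H$. Primitive: $\Delta(x)=x\otimes1+1\otimes x$. Reduced coproduct $\bar\Delta(x)=\Delta(x)-x\otimes1-1\otimes x\in H\otimes H$ for $x\in H$. Filtration: $F_1(H)=\mathrm{Prim}(H)$, $F_n(H)=\{x\in H:\bar\Delta(x)\in F_{n-1}(H)\otimes F_{n-1}(H)\}$; $H$ is connected if $H=\bigcup_{n\ge1}F_n(H)$. $\succ^1=\mathrm{Id}$, $\succ^n=\succ^{n-1}\circ(\mathrm{Id}^{\otimes n-2}\otimes\succ):H^{\otimes n}\to H$ (so $\succ^n(x_1\otimes\cdots\otimes x_n)=x_1\succ(x_2\succ(\cdots\succ x_n))$); $\bar\Delta^1=\mathrm{Id}$, $\bar\Delta^n=(\mathrm{Id}^{\otimes n-2}\otimes\bar\Delta)\circ\bar\Delta^{n-1}:H\to H^{\otimes n}$. By connectedness the sum defining $e_{tri}$ is finite for each $x$. *)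

From HB Require Import structures.
From mathcomp Require Import all_boot all_order all_algebra.
Set Implicit Arguments. Unset Strict Implicit. Unset Printing Implicit Defensive.
Import GRing.Theory.
Local Open Scope ring_scope.

Section QTri.
Variables (K : fieldType).

Definition bilin (A B V : lmodType K) (f : A -> B -> V) : Prop :=
  (forall (a : K) x y z, f (a *: x + y) z = a *: f x z + f y z) /\
  (forall (a : K) x y z, f x (a *: y + z) = a *: f x y + f x z).

(* Elements of A (x) A are represented by finite lists of pure tensors
   [:: (a1,b1); ...] standing for a1(x)b1 + ... .  Two representatives are
   the same tensor iff they agree under every bilinear map
   (universal property of the tensor product). *)
Definition tsum (A V : lmodType K) (f : A -> A -> V) (t : seq (A * A)) : V :=
  \sum_(p <- t) f p.1 p.2.

Definition teq (A : lmodType K) (t t' : seq (A * A)) : Prop :=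
  forall (V : lmodType K) (f : A -> A -> V), bilin f -> tsum f t = tsum f t'.

Definition tscale (A : lmodType K) (a : K) (t : seq (A * A)) : seq (A * A) :=
  [seq (a *: p.1, p.2) | p <- t].

Variable H : lmodType K.

(* H_+ = K 1 (+) H, an element (a, u) stands for a.1 + u *)
Definition Hp : lmodType K := (K^o * H)%type.
Definition unitp : Hp := (1 : K^o, 0 : H).
Definition inj (x : H) : Hp := (0 : K^o, x).
Definition eps (x : Hp) : K := x.1.
Definition pr (x : Hp) : H := x.2.

Variables (q : K) (prec dot succ : H -> H -> H).

Definition star (x y : H) : H := prec x y + q *: dot x y + succ x y.

(* * extended to H_+ with 1 as unit: (a+u)*(b+v) = ab + a v + b u + u*v *)
Definition starp (x y : Hp) : Hp :=
  ((eps x * eps y : K^o), eps x *: pr y + eps y *: pr x + star (pr x) (pr y)).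

(* For an operation o in {succ, dot, prec}:
   lu v = 1 o v  and ru u = u o 1 for u, v in H (unit conventions), and the
   term x_(1)*y_(1) (x) (x_(2) o y_(2)) of the compatibility, where the part
   with x_(2) = y_(2) = 1 is replaced by (x_(1) o y_(1)) (x) 1. *)
Definition compat_term (o : H -> H -> H) (lu ru : H -> H)
  (p r : Hp * Hp) : seq (Hp * Hp) :=
  let: (x1, x2) := p in let: (y1, y2) := r in
  [:: ((eps x2 * eps y2) *: inj (o (pr x1) (pr y1)), unitp);
      (starp x1 y1,
       inj (eps x2 *: lu (pr y2) + eps y2 *: ru (pr x2) + o (pr x2) (pr y2)))].

Definition compat_rhs (o : H -> H -> H) (lu ru : H -> H)
  (tx ty : seq (Hp * Hp)) : seq (Hp * Hp) :=
  flatten [seq flatten [seq compat_term o lu ru p r | r <- ty] | p <- tx].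

Record qtri_bialgebra (Delta : Hp -> seq (Hp * Hp)) : Prop := {
  prec_bilin : bilin prec;
  dot_bilin : bilin dot;
  succ_bilin : bilin succ;
  ax1 : forall a b c, prec (prec a b) c = prec a (prec b c + succ b c + q *: dot b c);
  ax2 : forall a b c, prec (succ a b) c = succ a (prec b c);
  ax3 : forall a b c, succ (prec a b + succ a b + q *: dot a b) c = succ a (succ b c);
  ax4 : forall a b c, dot (dot a b) c = dot a (dot b c);
  ax5 : forall a b c, dot (succ a b) c = succ a (dot b c);
  ax6 : forall a b c, dot (prec a b) c = dot a (succ b c);
  ax7 : forall a b c, prec (dot a b) c = dot a (prec b c);
  Delta_linear : forall (a : K) (x y : Hp),
      teq (Delta (a *: x + y)) (tscale a (Delta x) ++ Delta y);
  Delta_unit : teq (Delta unitp) [:: (unitp, unitp)];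
  counit_l : forall x : H, \sum_(p <- Delta (inj x)) eps p.1 *: p.2 = inj x;
  counit_r : forall x : H, \sum_(p <- Delta (inj x)) eps p.2 *: p.1 = inj x;
  compat_succ : forall x y : H,
      teq (Delta (inj (succ x y)))
          (compat_rhs succ id (fun _ => 0) (Delta (inj x)) (Delta (inj y)));
  compat_dot : forall x y : H,
      teq (Delta (inj (dot x y)))
          (compat_rhs dot (fun _ => 0) (fun _ => 0) (Delta (inj x)) (Delta (inj y)));
  compat_prec : forall x y : H,
      teq (Delta (inj (prec x y)))
          (compat_rhs prec (fun _ => 0) id (Delta (inj x)) (Delta (inj y)))
}.

Variable Delta : Hp -> seq (Hp * Hp).

Definition primitive (x : H) : Prop :=
  teq (Delta (inj x)) [:: (inj x, unitp); (unitp, inj x)].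

(* reduced coproduct, as a representative in H (x) H:
   (pr (x) pr) Delta(x) = (pr (x) pr)(x(x)1 + 1(x)x + Dbar x) = Dbar x *)
Definition Dbar (x : H) : seq (H * H) :=
  [seq (pr p.1, pr p.2) | p <- Delta (inj x)].

Fixpoint filt (n : nat) : H -> Prop :=
  match n with
  | 0 => fun _ => False
  | 1 => primitive
  | (m.+1) as n' => fun x => exists t : seq (H * H),
        teq (Dbar x) t /\ (forall p, p \in t -> filt m p.1 /\ filt m p.2)
  end.

Definition connected : Prop := forall x : H, exists n, filt n x.

(* Dbar^n : H -> H^(x)n, representatives as lists of words of length n;
   Dbar^n = (Id^(n-2) (x) Dbar) o Dbar^(n-1) applies Dbar to the last factor *)
Definition apply_last (w : seq H) : seq (seq H) :=
  match w with
  | [::] => [::]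
  | a :: w' => [seq rcons (rcons (belast a w') p.1) p.2 | p <- Dbar (last a w')]
  end.

Fixpoint Dbar_iter (n : nat) (x : H) : seq (seq H) :=
  match n with
  | 0 => [::]
  | 1 => [:: [:: x]]
  | (m.+1) as n' => flatten [seq apply_last w | w <- Dbar_iter m x]
  end.

Fixpoint succ_iter (w : seq H) : H :=
  match w with
  | [::] => 0
  | [:: x] => x
  | x :: w' => succ x (succ_iter w')
  end.

Definition etri_term (n : nat) (x : H) : H :=
  \sum_(w <- Dbar_iter n x) succ_iter w.

(* e is e_tri: for each x the series sum_(n>=1) (-1)^(n+1) succ^n o Dbar^n (x)
   has finitely many nonzero terms, i.e. its partial sums are eventually
   constant, with value e x *)
Definition is_etri (e : H -> H) : Prop :=
  forall x : H, exists N : nat, forall M : nat, (N <= M)%N ->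
    e x = \sum_(1 <= n < M.+1) ((-1) ^+ n.+1 : K) *: etri_term n x.

End QTri.

From Pilot Require Import Defs.
From HB Require Import structures.
From mathcomp Require Import all_boot all_order all_algebra.
Import GRing.Theory.
Local Open Scope ring_scope.
Set Implicit Arguments. Unset Strict Implicit. Unset Printing Implicit Defensive.

(* Put T_n = succ^n o Dbar^n and S_M = sum_(1<=n<=M) (-1)^(n+1) T_n, so that
   e_tri(x) is the eventual value of S_M(x).  Computing Dbar^(n+1) as "Dbar,
   then Dbar^n on the right factor" gives T_1 = Id and
   T_(n+1)(x) = sum x_(1) > T_n(x_(2)), hence S_(M+1)(x) = x - sum x_(1) > S_M(x_(2));
   for M large this is the recursion e(x) = x - sum x_(1) > e(x_(2)).
   Every T_n is linear because Delta is, hence so is e; with the recursion this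
   gives e(x) = x for primitive x.  For e(y > z) = 0 we write the recursion
   with the full coproduct, expand Delta(y > z) by the compatibility axiom,
   split Delta y and Delta z as u(x)1 + 1(x)u + Dbar u (counit axioms), and
   argue by induction on the filtration degrees of y and z: every term
   containing a factor e(u > v) with u, v of lower degree vanishes, and what is
   left is y > (e z + sum z_(1) > e z_(2)) - y > z = 0, by axiom (3) and the
   recursion for z. *)

Section Linearity.
Variable K : fieldType.

Definition lin (U V : lmodType K) (f : U -> V) : Prop :=
  forall (a : K) x y, f (a *: x + y) = a *: f x + f y.

Section LinearMap.
Variables (U V : lmodType K) (f : U -> V).
Hypothesis f_lin : lin f.

Lemma lin0 : f 0 = 0.
Proof.
have := f_lin 1 0 0; rewrite scaler0 addr0 scale1r => h.
by apply/esym/(@addrI _ (f 0)); rewrite addr0 -h.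
Qed.

Lemma linD x y : f (x + y) = f x + f y.
Proof. by have := f_lin 1 x y; rewrite !scale1r. Qed.

Lemma linZ a x : f (a *: x) = a *: f x.
Proof. by have := f_lin a x 0; rewrite !addr0 lin0 addr0. Qed.

Lemma lin_sum I (s : seq I) (G : I -> U) :
  f (\sum_(i <- s) G i) = \sum_(i <- s) f (G i).
Proof. exact: (big_morph f linD lin0). Qed.
End LinearMap.

Lemma lin_id (U : lmodType K) : lin (fun x : U => x).
Proof. by []. Qed.

Lemma lin_comp (U V W : lmodType K) (f : V -> W) (g : U -> V) :
  lin f -> lin g -> lin (fun x => f (g x)).
Proof. by move=> hf hg a x y; rewrite hg hf. Qed.

Lemma lin_add (U V : lmodType K) (f g : U -> V) :
  lin f -> lin g -> lin (fun x => f x + g x).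
Proof.
move=> hf hg a x y; rewrite hf hg scalerDr.
by rewrite -!addrA; congr (_ + _); rewrite addrCA.
Qed.

Lemma lin_scale (U V : lmodType K) (f : U -> V) (c : K) :
  lin f -> lin (fun x => c *: f x).
Proof. by move=> hf a x y; rewrite hf scalerDr !scalerA mulrC. Qed.

Lemma lin_scalev (U V : lmodType K) (g : U -> K^o) (v : V) :
  lin g -> lin (fun x => (g x : K) *: v).
Proof. by move=> hg a x y; rewrite hg scalerDl scalerA. Qed.

Lemma lin_sumf (U V : lmodType K) I (s : seq I) (F : I -> U -> V) :
  (forall i, lin (F i)) -> lin (fun x => \sum_(i <- s) F i x).
Proof.
move=> hF a x y; rewrite scaler_sumr -big_split /=.
by apply: eq_bigr => i _; exact: hF.
Qed.

Lemma bilinL (U W V : lmodType K) (f : U -> W -> V) z :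
  bilin f -> lin (fun x => f x z).
Proof. by case=> hl _ a x y; apply: hl. Qed.

Lemma bilinR (U W V : lmodType K) (f : U -> W -> V) x :
  bilin f -> lin (f x).
Proof. by case=> _ hr a y z; apply: hr. Qed.

Lemma mkbilin (U W V : lmodType K) (f : U -> W -> V) :
  (forall z, lin (fun x => f x z)) -> (forall x, lin (f x)) -> bilin f.
Proof. by move=> hl hr; split=> a x y z; [apply: hl | apply: hr]. Qed.

Lemma bilin_comp (U1 U2 W1 W2 V : lmodType K) (f : W1 -> W2 -> V)
  (g1 : U1 -> W1) (g2 : U2 -> W2) :
  bilin f -> lin g1 -> lin g2 -> bilin (fun u v => f (g1 u) (g2 v)).
Proof.
move=> [hl hr] h1 h2; split => a x y z; first by rewrite h1 hl.
by rewrite h2 hr.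
Qed.

Lemma tsum_cat (A V : lmodType K) (f : A -> A -> V) s t :
  tsum f (s ++ t) = tsum f s + tsum f t.
Proof. by rewrite /tsum big_cat. Qed.

Lemma tsum_scale (A V : lmodType K) (f : A -> A -> V) a t :
  bilin f -> tsum f (tscale a t) = a *: tsum f t.
Proof.
move=> hf; rewrite /tsum /tscale big_map scaler_sumr.
by apply: eq_bigr => p _ /=; rewrite (linZ (bilinL _ hf)).
Qed.
End Linearity.

Section Coproduct.
Variables (K : fieldType) (H : lmodType K).
Local Notation one := (unitp H).

Lemma hp_dec (u : Hp H) : u = eps u *: one + inj (pr u).
Proof.
case: u => a b; rewrite /eps /pr /unitp /inj /=.
have -> : a *: ((1 : K^o), (0 : H)) + ((0 : K^o), b)
          = ((a * 1 + 0 : K^o), a *: 0 + b) :> Hp H by [].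
by rewrite mulr1 addr0 scaler0 add0r.
Qed.

Lemma lin_pr : lin (@pr K H).
Proof. by []. Qed.

Lemma lin_eps : lin (fun x : Hp H => (eps x : K^o)).
Proof. by []. Qed.

Lemma lin_inj : lin (@inj K H).
Proof.
move=> a x y; rewrite /inj.
have -> : a *: ((0 : K^o), x) + ((0 : K^o), y)
          = ((a * 0 + 0 : K^o), a *: x + y) :> Hp H by [].
by rewrite mulr0 addr0.
Qed.

Variable Delta : Hp H -> seq (Hp H * Hp H).

Lemma Dbar_tsum (V : lmodType K) (F : H -> H -> V) x :
  \sum_(p <- Dbar Delta x) F p.1 p.2 = tsum (fun u v => F (pr u) (pr v)) (Delta (inj x)).
Proof. by rewrite /Dbar big_map. Qed.

(* Unfolding F_(m+1): Dbar y is represented by a tensor with factors in F_m.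
   For m = 0 (y primitive) the empty tensor works, since then Dbar y = 0. *)
Lemma filt_dec m y : filt Delta m.+1 y -> exists t : seq (H * H),
  teq (Dbar Delta y) t /\ (forall p, p \in t -> filt Delta m p.1 /\ filt Delta m p.2).
Proof.
case: m => [|m]; last by [].
move=> hp; exists [::]; split => // V f hf.
rewrite /tsum (Dbar_tsum f) big_nil.
rewrite (hp _ _ (bilin_comp hf lin_pr lin_pr)) /tsum !big_cons big_nil /=.
by rewrite (lin0 (bilinR _ hf)) (lin0 (bilinL _ hf)) !addr0.
Qed.

Section LinearCoproduct.
Hypothesis Delta_lin : forall (a : K) (x y : Hp H),
  teq (Delta (a *: x + y)) (tscale a (Delta x) ++ Delta y).

Lemma Delta_tsum_lin (V : lmodType K) (f : Hp H -> Hp H -> V) :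
  bilin f -> lin (fun x : H => tsum f (Delta (inj x))).
Proof.
move=> hf a x y; rewrite lin_inj.
by rewrite (Delta_lin a (inj x) (inj y) hf) tsum_cat tsum_scale.
Qed.

Lemma Dbar_sum_lin (V : lmodType K) (F : H -> H -> V) :
  bilin F -> lin (fun x => \sum_(p <- Dbar Delta x) F p.1 p.2).
Proof.
move=> hF a x y; rewrite !Dbar_tsum; apply: Delta_tsum_lin.
exact: bilin_comp hF lin_pr lin_pr.
Qed.
End LinearCoproduct.

Section Counit.
Hypothesis counit_left : forall x : H,
  \sum_(p <- Delta (inj x)) eps p.1 *: p.2 = inj x.
Hypothesis counit_right : forall x : H,
  \sum_(p <- Delta (inj x)) eps p.2 *: p.1 = inj x.

(* The counit axioms amount to Delta y = y (x) 1 + 1 (x) y + Dbar y. *)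
Lemma Delta_decomp (V : lmodType K) (f : Hp H -> Hp H -> V) y : bilin f ->
  tsum f (Delta (inj y)) = f (inj y) one + f one (inj y)
     + \sum_(p <- Dbar Delta y) f (inj p.1) (inj p.2).
Proof.
move=> hf; have [hl hr] := hf.
have expand (p : Hp H * Hp H) : f p.1 p.2 =
   (eps p.1 * eps p.2) *: f one one + eps p.1 *: f one (inj (pr p.2))
   + (eps p.2 *: f (inj (pr p.1)) one + f (inj (pr p.1)) (inj (pr p.2))).
  by rewrite {1}(hp_dec p.1) {1}(hp_dec p.2) hl !hr scalerDr scalerA.
rewrite /tsum (eq_bigr _ (fun p _ => expand p)) !big_split /=.
have eps_eps : \sum_(p <- Delta (inj y)) eps p.1 * eps p.2 = 0.
  have eps_sum (s : seq (Hp H * Hp H)) (F : Hp H * Hp H -> Hp H) :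
      eps (\sum_(i <- s) F i) = \sum_(i <- s) eps (F i).
    by elim: s => [|i s IH]; rewrite ?big_nil // !big_cons -IH.
  by have := congr1 (@eps K H) (counit_left y); rewrite eps_sum.
have left_unit : \sum_(p <- Delta (inj y)) eps p.1 *: f one (inj (pr p.2))
                 = f one (inj y).
  have hl2 : lin (fun v : Hp H => f one (inj (pr v))).
    exact: lin_comp (bilinR _ hf) (lin_comp lin_inj lin_pr).
  transitivity (f one (inj (pr (\sum_(p <- Delta (inj y)) eps p.1 *: p.2))));
    last by rewrite counit_left.
  by rewrite (lin_sum hl2); apply: eq_bigr => p _; rewrite (linZ hl2).
have right_unit : \sum_(p <- Delta (inj y)) eps p.2 *: f (inj (pr p.1)) one
                  = f (inj y) one.
  have hl3 : lin (fun v : Hp H => f (inj (pr v)) one).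
    exact: lin_comp (bilinL _ hf) (lin_comp lin_inj lin_pr).
  transitivity (f (inj (pr (\sum_(p <- Delta (inj y)) eps p.2 *: p.1))) one);
    last by rewrite counit_right.
  by rewrite (lin_sum hl3); apply: eq_bigr => p _; rewrite (linZ hl3).
rewrite -scaler_suml eps_eps scale0r add0r left_unit right_unit /Dbar big_map.
by rewrite addrA [f one _ + _]addrC.
Qed.
End Counit.

Lemma apply_last_ne w : all (fun v => v != [::]) (apply_last Delta w).
Proof.
case: w => //= a w; rewrite all_map; apply/allP => p _ /=.
by rewrite -size_eq0 size_rcons.
Qed.

Lemma Dbar_iter_ne n x : all (fun w => w != [::]) (Dbar_iter Delta n x).
Proof.
case: n => [|[|n]] //=; apply/allP => w /flattenP [l /mapP [v _ ->]].
by move: w; apply/allP; exact: apply_last_ne.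
Qed.

Lemma apply_last_cons a w : w != [::] ->
  apply_last Delta (a :: w) = [seq a :: v | v <- apply_last Delta w].
Proof. by case: w => //= b w _; rewrite -map_comp. Qed.

Lemma Dbar_iterS n x : Dbar_iter Delta n.+2 x =
  flatten [seq [seq p.1 :: w | w <- Dbar_iter Delta n.+1 p.2] | p <- Dbar Delta x].
Proof.
elim: n x => [|n IH] x.
  by rewrite /= cats0; elim: (Dbar Delta x) => //= p s ->.
have unfold m y : Dbar_iter Delta m.+2 y =
    flatten [seq apply_last Delta w | w <- Dbar_iter Delta m.+1 y] by [].
rewrite unfold IH; under [in RHS]eq_map => p do rewrite unfold.
move: (Dbar_iter_ne n.+1); generalize (Dbar_iter Delta n.+1) => D hD.
elim: (Dbar Delta x) => //= p s IHs; rewrite map_cat flatten_cat IHs.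
congr (_ ++ _); move: (hD p.2); elim: (D p.2) => [//|w t IHt] /andP[wn tn].
have flatten_cons T (a : seq T) r : flatten (a :: r) = a ++ flatten r by [].
by rewrite !map_cons !flatten_cons map_cat (IHt tn) apply_last_cons.
Qed.
End Coproduct.
Arguments lin_pr {K H}.
Arguments lin_eps {K H}.
Arguments lin_inj {K H}.

Section EulerianIdempotent.
Variables (K : fieldType) (H : lmodType K) (succ : H -> H -> H)
  (Delta : Hp H -> seq (Hp H * Hp H)) (e : H -> H).
Hypothesis succ_bil : bilin succ.
Hypothesis e_etri : is_etri succ Delta e.
Local Notation T := (etri_term succ Delta).

Lemma etri_term1 x : T 1 x = x.
Proof. by rewrite /etri_term /= big_seq1. Qed.

Lemma etri_termS n x : T n.+2 x = \sum_(p <- Dbar Delta x) succ p.1 (T n.+1 p.2).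
Proof.
rewrite /etri_term Dbar_iterS big_flatten big_map /=.
apply: eq_bigr => p _; rewrite big_map (lin_sum (bilinR _ succ_bil)).
apply: eq_big_seq => w.
by move/allP: (Dbar_iter_ne Delta n.+1 p.2) => ne /ne; case: w.
Qed.

Definition etri_partial (M : nat) (x : H) : H :=
  \sum_(1 <= n < M.+1) ((-1) ^+ n.+1 : K) *: T n x.

Lemma etri_partialS M x :
  etri_partial M.+1 x = x - \sum_(p <- Dbar Delta x) succ p.1 (etri_partial M p.2).
Proof.
rewrite /etri_partial big_nat_recl // expr2 mulrNN mulr1 scale1r etri_term1.
congr (_ + _).
under [in RHS]eq_bigr => p _ do rewrite (lin_sum (bilinR _ succ_bil)).
rewrite exchange_big /= -sumrN; apply: eq_big_nat => n /andP[n_gt0 _].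
case: n n_gt0 => // n _.
rewrite etri_termS scaler_sumr -sumrN; apply: eq_bigr => p _.
by rewrite (linZ (bilinR _ succ_bil)) exprS mulN1r scaleNr.
Qed.

Lemma etri_partial_eventually (s : seq H) : exists N, forall M, (N <= M)%N ->
  forall x, x \in s -> e x = etri_partial M x.
Proof.
elim: s => [|y s [Ns hs]]; first by exists 0%N.
have [Ny hy] := e_etri y.
exists (maxn Ny Ns) => M hM x; rewrite in_cons => /orP[/eqP -> | hx].
  by apply: hy; apply: leq_trans hM; apply: leq_maxl.
by apply: hs => //; apply: leq_trans hM; apply: leq_maxr.
Qed.

Lemma etri_rec x : e x = x - \sum_(p <- Dbar Delta x) succ p.1 (e p.2).
Proof.
have [N hN] := etri_partial_eventually (x :: [seq p.2 | p <- Dbar Delta x]).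
rewrite (hN N.+1 (leqnSn N) x (mem_head _ _)) etri_partialS; congr (_ - _).
by apply: eq_big_seq => p hp; rewrite (hN N) // in_cons map_f ?orbT.
Qed.

(* The same recursion, summed over the full coproduct: the extra terms
   x (x) 1 and 1 (x) x contribute x > e(0) = 0 and 0 > e(x) = 0. *)
Definition succ_etri (u v : Hp H) : H := succ (pr u) (e (pr v)).

Lemma etri_rec_full x : e x = x - tsum succ_etri (Delta (inj x)).
Proof. by rewrite etri_rec (Dbar_tsum Delta (fun a b => succ a (e b))). Qed.

Section LinearCoproduct.
Hypothesis Delta_lin : forall (a : K) (x y : Hp H),
  teq (Delta (a *: x + y)) (tscale a (Delta x) ++ Delta y).

Lemma etri_term_lin n : lin (T n).
Proof.
case: n => [|n].
  by move=> a x y; rewrite /etri_term /= !big_nil scaler0 addr0.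
elim: n => [|n IH]; first by move=> a x y; rewrite !etri_term1.
move=> a x y; rewrite !etri_termS.
exact: (Dbar_sum_lin Delta_lin (bilin_comp succ_bil (@lin_id K H) IH)).
Qed.

Lemma etri_partial_lin M : lin (etri_partial M).
Proof.
apply: lin_sumf => n; apply: lin_scale; exact: etri_term_lin.
Qed.

(* e is linear, being pointwise an eventual value of linear maps. *)
Lemma etri_lin : lin e.
Proof.
move=> a x y; have [N hN] := etri_partial_eventually [:: a *: x + y; x; y].
have in_s z : z \in [:: a *: x + y; x; y] -> e z = etri_partial N z.
  exact: hN.
rewrite (in_s (a *: x + y)) ?(in_s x) ?(in_s y) ?in_cons ?eqxx ?orbT //.
exact: etri_partial_lin.
Qed.

Lemma succ_etri_bilin : bilin succ_etri.
Proof.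
have succ_e : bilin (fun a b => succ a (e b)).
  exact: bilin_comp succ_bil (@lin_id K H) etri_lin.
exact: bilin_comp succ_e lin_pr lin_pr.
Qed.

Lemma etri_primitive x : primitive Delta x -> e x = x.
Proof.
move=> hp; rewrite etri_rec_full (hp _ _ succ_etri_bilin) /tsum.
rewrite !big_cons big_nil /succ_etri /= (lin0 etri_lin).
by rewrite (lin0 (bilinR _ succ_bil)) (lin0 (bilinL _ succ_bil)) !addr0 subr0.
Qed.
End LinearCoproduct.
End EulerianIdempotent.

Section SuccIsKilled.
Variables (K : fieldType) (H : lmodType K) (q : K) (prec dot succ : H -> H -> H)
  (Delta : Hp H -> seq (Hp H * Hp H)) (e : H -> H).
Hypothesis HB : qtri_bialgebra q prec dot succ Delta.
Hypothesis e_etri : is_etri succ Delta e.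
Local Notation one := (unitp H).
Local Notation star := (star q prec dot succ).
Local Notation starp := (starp q prec dot succ).

Let succ_bil : bilin succ := succ_bilin HB.
Let e_lin : lin e := etri_lin succ_bil e_etri (Delta_linear HB).

Lemma star_bilin : bilin star.
Proof.
have pbl := prec_bilin HB; have dbl := dot_bilin HB.
apply: mkbilin => [z|x].
- apply: (lin_add (lin_add (bilinL _ pbl) (lin_scale _ (bilinL _ dbl)))).
  exact: bilinL.
- apply: (lin_add (lin_add (bilinR _ pbl) (lin_scale _ (bilinR _ dbl)))).
  exact: bilinR.
Qed.

Lemma succ_star y c w : succ (star y c) w = succ y (succ c w).
Proof.
rewrite -(ax3 HB) /Defs.star; congr succ.
by rewrite -addrA [q *: _ + _]addrC addrA.
Qed.

Lemma pr_starp_linR (x : Hp H) : lin (fun y => pr (starp x y)).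
Proof.
apply: (lin_add (lin_add _ _)) (lin_comp (bilinR _ star_bilin) lin_pr).
  exact: lin_scale lin_pr.
exact: lin_scalev lin_eps.
Qed.

Lemma pr_starp_linL (y : Hp H) : lin (fun x => pr (starp x y)).
Proof.
apply: (lin_add (lin_add _ _)) (lin_comp (bilinL _ star_bilin) lin_pr).
  exact: lin_scalev lin_eps.
exact: lin_scale lin_pr.
Qed.

(* The contribution of x_(1)(x)x_(2) and y_(1)(x)y_(2) to the recursion for
   e(x > y), once Delta(x > y) is expanded by the compatibility axiom:
   (x_(1) * y_(1)) > e(x_(2) > y_(2)), with 1 > v = v and u > 1 = 0. *)
Definition succ_compat (x1 x2 y1 y2 : Hp H) : H :=
  succ (pr (starp x1 y1)) (e (eps x2 *: pr y2 + succ (pr x2) (pr y2))).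

Lemma succ_compat_bilinR x1 x2 : bilin (fun y1 y2 => succ_compat x1 x2 y1 y2).
Proof.
apply: mkbilin => [z|y1]; rewrite /succ_compat.
  exact: lin_comp (bilinL _ succ_bil) (pr_starp_linR x1).
apply: lin_comp (bilinR _ succ_bil) (lin_comp e_lin _).
apply: lin_add; first exact: lin_scale lin_pr.
exact: lin_comp (bilinR _ succ_bil) lin_pr.
Qed.

Lemma succ_compat_bilinL y1 y2 : bilin (fun x1 x2 => succ_compat x1 x2 y1 y2).
Proof.
apply: mkbilin => [z|x1]; rewrite /succ_compat.
  exact: lin_comp (bilinL _ succ_bil) (pr_starp_linL y1).
apply: lin_comp (bilinR _ succ_bil) (lin_comp e_lin _).
apply: lin_add; first exact: lin_scalev lin_eps.
exact: lin_comp (bilinL _ succ_bil) lin_pr.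
Qed.

(* Terms with y_(2) = 1 vanish (u > 1 = 0), and so do terms whose right factor
   e(x_(2) > y_(2)) is known to vanish. *)
Lemma succ_compat_unitR x1 x2 y1 : succ_compat x1 x2 y1 one = 0.
Proof.
rewrite /succ_compat /= scaler0 (lin0 (bilinR _ succ_bil)) add0r.
by rewrite (lin0 e_lin) (lin0 (bilinR _ succ_bil)).
Qed.

Lemma succ_compat_vanish x1 w y1 y2 :
  e (succ w (pr y2)) = 0 -> succ_compat x1 (inj w) y1 y2 = 0.
Proof.
by move=> h; rewrite /succ_compat /= scale0r add0r h (lin0 (bilinR _ succ_bil)).
Qed.

Lemma etri_succ_expand y z : e (succ y z) = succ y z -
  \sum_(p <- Delta (inj y)) \sum_(r <- Delta (inj z)) succ_compat p.1 p.2 r.1 r.2.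
Proof.
rewrite (etri_rec_full succ_bil e_etri).
rewrite (compat_succ HB y z (succ_etri_bilin succ_bil e_etri (Delta_linear HB))).
congr (_ - _); rewrite /compat_rhs /tsum big_flatten big_map.
apply: eq_bigr => -[x1 x2] _; rewrite big_flatten big_map.
apply: eq_bigr => -[y1 y2] _.
rewrite big_cons big_cons big_nil /succ_etri /succ_compat /=.
rewrite (lin0 e_lin) (lin0 (bilinR _ succ_bil)) add0r addr0.
by rewrite scaler0 addr0.
Qed.

(* Summing succ_compat over Delta z, split as z(x)1 + 1(x)z + Dbar z with Dbar z
   represented by tz; the term z(x)1 contributes nothing. *)
Definition compat_right (z : H) (tz : seq (H * H)) (x1 x2 : Hp H) : H :=
  succ_compat x1 x2 one (inj z) + \sum_(r <- tz) succ_compat x1 x2 (inj r.1) (inj r.2).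

Lemma compat_right_expand z tz x1 x2 : teq (Dbar Delta z) tz ->
  \sum_(r <- Delta (inj z)) succ_compat x1 x2 r.1 r.2 = compat_right z tz x1 x2.
Proof.
move=> hz; have hb := succ_compat_bilinR x1 x2.
have := Delta_decomp (counit_l HB) (counit_r HB) z hb.
rewrite /tsum => ->; rewrite succ_compat_unitR add0r; congr (_ + _).
by have := hz _ _ (bilin_comp hb lin_inj lin_inj); rewrite /tsum.
Qed.

Lemma compat_right_bilin z tz : bilin (compat_right z tz).
Proof.
apply: mkbilin => [w|x1]; apply: lin_add.
- exact: bilinL (succ_compat_bilinL _ _).
- exact: lin_sumf (fun r => bilinL _ (succ_compat_bilinL _ _)).
- exact: bilinR (succ_compat_bilinL _ _).
- exact: lin_sumf (fun r => bilinR _ (succ_compat_bilinL _ _)).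
Qed.

Lemma compat_right_unit_left y z tz :
  (forall r, r \in tz -> e (succ y r.2) = 0) -> compat_right z tz one (inj y) = 0.
Proof.
move=> vanish; rewrite /compat_right big1_seq ?addr0; last first.
  by move=> r /andP[_ hr]; apply: succ_compat_vanish; apply: vanish.
rewrite /succ_compat /= !scaler0 !addr0 (lin0 (bilinL _ star_bilin)) add0r.
exact: (lin0 (bilinL _ succ_bil)).
Qed.

(* The term y(x)1 of Delta y gives y > (e z + sum z_(1) > e z_(2)) = y > z. *)
Lemma compat_right_unit_right y z tz :
  teq (Dbar Delta z) tz -> compat_right z tz (inj y) one = succ y z.
Proof.
move=> hz; have succ0 w : succ 0 w = 0 by exact: (lin0 (bilinL _ succ_bil)).
have unit_term : succ_compat (inj y) one one (inj z) = succ y (e z).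
  rewrite /succ_compat /= scaler0 add0r scale1r (lin0 (bilinR _ star_bilin)).
  by rewrite addr0 scale1r succ0 addr0.
have dbar_term c d : succ_compat (inj y) one (inj c) (inj d) = succ y (succ c (e d)).
  by rewrite /succ_compat /= !scale0r !add0r scale1r succ0 addr0 succ_star.
rewrite /compat_right unit_term; under eq_bigr => r _ do rewrite dbar_term.
rewrite -(lin_sum (bilinR _ succ_bil)) -(linD (bilinR _ succ_bil)).
have succ_e : bilin (fun a b => succ a (e b)).
  exact: bilin_comp succ_bil (@lin_id K H) e_lin.
congr succ; rewrite {1}(etri_rec succ_bil e_etri z).
by have := hz _ _ succ_e; rewrite /tsum => ->; rewrite subrK.
Qed.

Lemma etri_succ_step y z ty tz :
  teq (Dbar Delta y) ty -> teq (Dbar Delta z) tz ->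
  (forall r, r \in tz -> e (succ y r.2) = 0) ->
  (forall p, p \in ty -> e (succ p.2 z) = 0) ->
  (forall p r, p \in ty -> r \in tz -> e (succ p.2 r.2) = 0) ->
  e (succ y z) = 0.
Proof.
move=> hy hz vanish_right vanish_left vanish_both.
have hb := compat_right_bilin z tz.
rewrite etri_succ_expand; under eq_bigr => p _ do rewrite (compat_right_expand p.1 p.2 hz).
have := Delta_decomp (counit_l HB) (counit_r HB) y hb; rewrite /tsum => ->.
have := hy _ _ (bilin_comp hb lin_inj lin_inj); rewrite /tsum => ->.
rewrite (compat_right_unit_right _ hz) (compat_right_unit_left z vanish_right).
rewrite big1_seq ?addr0 ?subrr // => p /andP[_ hp].
rewrite /compat_right succ_compat_vanish ?vanish_left // add0r.
by rewrite big1_seq // => r /andP[_ hr]; apply: succ_compat_vanish; apply: vanish_both.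
Qed.

Lemma etri_succ_filt k m n y z : (m + n <= k)%N ->
  filt Delta m y -> filt Delta n z -> e (succ y z) = 0.
Proof.
elim: k m n y z => [|k IH] [|m] [|n] y z //= hle hy hz.
move: (hy) (hz) => /filt_dec [ty [hty Fy]] /filt_dec [tz [htz Fz]].
rewrite addSn ltnS in hle.
apply: (etri_succ_step hty htz).
- move=> r hr; apply: (IH m.+1 n) => //; last by case: (Fz r hr).
  by rewrite addSn -addnS.
- by move=> p hp; apply: (IH m n.+1) => //; case: (Fy p hp).
- move=> p r hp hr; apply: (IH m n); last by case: (Fz r hr).
  + by apply: leq_trans hle; rewrite leq_add2l.
  + by case: (Fy p hp).
Qed.
End SuccIsKilled.

Theorem mainTheorem3 (K : fieldType) (H : lmodType K) (q : K)
  (prec dot succ : H -> H -> H) (Delta : Hp H -> seq (Hp H * Hp H))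
  (e : H -> H) :
  qtri_bialgebra q prec dot succ Delta ->
  connected Delta ->
  is_etri succ Delta e ->
  (forall x : H, e x = x - \sum_(p <- Dbar Delta x) succ p.1 (e p.2)) /\
  (forall x : H, primitive Delta x -> e x = x) /\
  (forall y z : H, e (succ y z) = 0).
Proof.
move=> HB conn e_etri; have succ_bil := succ_bilin HB.
split; first exact: (etri_rec succ_bil e_etri).
split; first exact: (etri_primitive succ_bil e_etri (Delta_linear HB)).
move=> y z; have [m hy] := conn y; have [n hz] := conn z.
exact: (etri_succ_filt HB e_etri (leqnn (m + n)%N) hy hz).
Qed.
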